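(* Let $G$ be a fixed graph, $k$ an integer, and $G_0,G_1,\dots,G_r=G$ a sequence of graphs on the same vertex set where $G_i$ is obtained from $G_{i+1}$ by deleting an edge $\{v_i,u_i\}$. Assume that for some $\alpha\in[0,1]$, for every $i=0,\dots,r-1$ and all $c,q\in[k]$ with $c\ne q$, the set $\Omega_i(c,c)$ is $\alpha$-isomorphic to $\Omega_i(q,c)$ with $\alpha$-function $H_i(\cdot,q)$. Let $\mu$ be the uniform distribution over the $k$-colourings of $G$ and $\mu'$ the distribution of the colouring $Y_r$ returned by the procedure described in the context. Then $\|\mu-\mu'\|\le r\cdot\alpha$.
   Context: $[k]=\{1,\dots,k\}$; $\Omega_i$ is the set of proper $k$-colourings of $G_i$ and $\Omega_i(c,q)$ the set of those assigning colour $c$ to $v_i$ and $q$ to $u_i$. $\|\nu_a-\nu_b\|=\max_A|\nu_a(A)-\nu_b(A)|$. For $\sigma\in\Omega_i$ and $q\ne\sigma_{v_i}$, the disagreement graph $Q$ is the subgraph of $G_i$ induced by all vertices reachable from $v_i$ by a path in $G_i$ whose vertices all have colours in $\{\sigma_{v_i},q\}$; $H_i(\sigma,q)$ is obtained from $\sigma$ by swapping colours $\sigma_{v_i}$ and $q$ on the vertices of $Q$. $\Omega'$ is $\alpha$-isomorphic to $\Omega''$ if there exist $A\subseteq\Omega'$, $B\subseteq\Omega''$ with $|A|\ge(1-\alpha)|\Omega'|$, $|B|\ge(1-\alpha)|\Omega''|$ and a bijection $h:A\to B$; a map $F$ on $\Omega'$ is an $\alpha$-function if $F=h$ on $A$ for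 such $A,B,h$. Procedure: $Y_0$ is uniformly distributed over $\Omega_0$; for $i=0,\dots,r-1$, if $Y_i(v_i)\ne Y_i(u_i)$ set $Y_{i+1}=Y_i$, otherwise choose $q$ uniformly from $[k]\setminus\{Y_i(v_i)\}$ and set $Y_{i+1}=H_i(Y_i,q)$. Output $Y_r$. *)

From HB Require Import structures.
From mathcomp Require Import all_boot all_order all_algebra.
Set Implicit Arguments. Unset Strict Implicit. Unset Printing Implicit Defensive.
Import Order.TTheory GRing.Theory Num.Theory.
Local Open Scope ring_scope.

Section Colourings.
Variables (V : finType) (k : nat).

Definition col := {ffun V -> 'I_k}.

Definition proper (e : rel V) (s : col) : bool :=
  [forall x, forall y, e x y ==> (s x != s y)].

Definition Omega (e : rel V) : {set col} := [set s | proper e s].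

Definition Omega_cq (e : rel V) (v u : V) (c q : 'I_k) : {set col} :=
  [set s | proper e s & (s v == c) && (s u == q)].

Definition disagreement (e : rel V) (v : V) (s : col) (q : 'I_k) : {set V} :=
  [set x | connect
     (fun a b => [&& e a b, (s a == s v) || (s a == q) & (s b == s v) || (s b == q)])
     v x].

Definition kempe (e : rel V) (v : V) (s : col) (q : 'I_k) : col :=
  [ffun x => if x \in disagreement e v s q then
               (if s x == s v then q else if s x == q then s v else s x)
             else s x].

Definition alpha_iso_fun {R : realFieldType} (alpha : R)
  (Om1 Om2 : {set col}) (F : col -> col) : Prop :=
  exists (A B : {set col}),
    [/\ A \subset Om1, B \subset Om2,
        (1 - alpha) * #|Om1|%:R <= #|A|%:R,
        (1 - alpha) * #|Om2|%:R <= #|B|%:R &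
        [/\ {in A, forall x, F x \in B}, {in A &, injective F} & B \subset F @: A]].

Definition unif {R : realFieldType} (S : {set col}) (s : col) : R :=
  if s \in S then (#|S|%:R)^-1 else 0.

Definition prob {R : realFieldType} (p : col -> R) (A : {set col}) : R :=
  \sum_(s in A) p s.

Definition tv_dist {R : realFieldType} (p1 p2 : col -> R) : R :=
  \big[Num.max/0]_(A : {set col}) `|prob p1 A - prob p2 A|.

(* Law of the procedure.  E i = edge relation of G_i, (v i, u i) the deleted edge. *)
Variables (E : nat -> rel V) (v u : nat -> V).

Definition step_kernel {R : realFieldType} (i : nat) (s t : col) : R :=
  if s (v i) != s (u i) then (if t == s then 1 else 0)
  else \sum_(q : 'I_k | q != s (v i))
         (k.-1%:R)^-1 * (if kempe (E i) (v i) s q == t then 1 else 0).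

Fixpoint law {R : realFieldType} (n : nat) : col -> R :=
  match n with
  | 0 => unif (Omega (E 0))
  | i.+1 => fun t => \sum_(s : col) law i s * step_kernel i s t
  end.

End Colourings.

(* A step of the procedure is a Markov kernel, so it does not increase the
   total variation distance; by the triangle inequality it therefore suffices
   to show that one step maps the uniform law on Omega_i to within alpha of the
   uniform law on Omega_{i+1}, which consists of the colourings of Omega_i that
   differ at v_i and u_i.  After the step every such colouring keeps its mass
   1/|Omega_i|, and the image H_i(s, q) of a "good" s in Omega_i(c, c) gains at
   least 1/((k-1)|Omega_i|) more.  By alpha-isomorphism the good images fill a
   (1 - alpha)-fraction of every block Omega_i(q, c) and number at least
   (1 - alpha)(k - 1)|Omega_i(c, c)|; summing the remaining deficit with
   respect to 1/|Omega_{i+1}| over the blocks bounds it by alpha. *)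

From Pilot Require Import Defs.
From mathcomp Require Import all_boot all_order all_algebra.
From mathcomp Require Import ring lra.
Set Implicit Arguments. Unset Strict Implicit. Unset Printing Implicit Defensive.
Import Order.TTheory GRing.Theory Num.Theory.
Local Open Scope ring_scope.

Section TotalVariation.
Variables (R : realFieldType) (V : finType) (k : nat).
Local Notation col := (Defs.col V k).
Implicit Types (p : col -> R) (A : {set col}).

Lemma le_tv_dist p1 p2 A : `|prob p1 A - prob p2 A| <= tv_dist p1 p2.
Proof. by rewrite /tv_dist (bigD1 A) //= le_max lexx. Qed.

Lemma tv_dist_ge0 p1 p2 : 0 <= tv_dist p1 p2.
Proof. exact: le_trans (normr_ge0 _) (le_tv_dist p1 p2 set0). Qed.

Lemma tv_dist_le p1 p2 (c : R) : 0 <= c ->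
  (forall A, `|prob p1 A - prob p2 A| <= c) -> tv_dist p1 p2 <= c.
Proof.
move=> c_ge0 bound; rewrite /tv_dist; elim/big_ind: _ => // x y.
by rewrite ge_max => -> ->.
Qed.

Lemma tv_dist_triangle p1 p2 p3 : tv_dist p1 p3 <= tv_dist p1 p2 + tv_dist p2 p3.
Proof.
apply: tv_dist_le => [|A]; first by rewrite addr_ge0 ?tv_dist_ge0.
by apply: le_trans (ler_distD (prob p2 A) _ _) _; rewrite lerD ?le_tv_dist.
Qed.

Lemma tv_dist_le_excess p1 p2 : \sum_t p1 t = \sum_t p2 t ->
  tv_dist p1 p2 <= \sum_t Num.max (p1 t - p2 t) 0.
Proof.
move=> same_mass.
have excess_ge A : prob p1 A - prob p2 A <= \sum_t Num.max (p1 t - p2 t) 0.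
  rewrite /prob -sumrB [X in _ <= X](bigID (mem A)) /= -[X in X <= _]addr0.
  apply: lerD; first by apply: ler_sum => t _; rewrite le_max lexx.
  by apply: sumr_ge0 => t _; rewrite le_max lexx orbT.
apply: tv_dist_le => [|A]; first by apply: sumr_ge0 => t _; rewrite le_max lexx orbT.
have probC p : prob p A = \sum_t p t - prob p (~: A).
  rewrite /prob [X in _ = X - _](bigID (mem A)) /=.
  suff -> : \sum_(s in ~: A) p s = \sum_(s | s \notin A) p s by rewrite addrK.
  by apply: eq_bigl => s; rewrite in_setC.
rewrite ler_norml excess_ge andbT !probC same_mass.
by have := excess_ge (~: A); lra.
Qed.

Definition push (K : col -> col -> R) p : col -> R := fun t => \sum_s p s * K s t.

Lemma push_ge0 K p t : (forall s t, 0 <= K s t) -> (forall s, 0 <= p s) -> 0 <= push K p t.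
Proof. by move=> K_ge0 p_ge0; apply: sumr_ge0 => s _; rewrite mulr_ge0. Qed.

Lemma sum_push K p : (forall s, \sum_t K s t = 1) -> \sum_t push K p t = \sum_s p s.
Proof.
move=> K_sum1; rewrite /push exchange_big; apply: eq_bigr => s _.
by rewrite -mulr_sumr K_sum1 mulr1.
Qed.

Lemma weighted_diff_le_tv p1 p2 (w : col -> R) : (forall s, 0 <= w s <= 1) ->
  `|\sum_s (p1 s - p2 s) * w s| <= tv_dist p1 p2.
Proof.
move=> w01; set P := [set s | 0 < p1 s - p2 s].
have mass A : \sum_(s in A) (p1 s - p2 s) = prob p1 A - prob p2 A by rewrite sumrB.
have hi : \sum_(s in P) (p1 s - p2 s) * w s <= \sum_(s in P) (p1 s - p2 s).
  apply: ler_sum => s; rewrite inE => /ltW d_ge0.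
  by rewrite ler_piMr //; case/andP: (w01 s).
have lo : \sum_(s in ~: P) (p1 s - p2 s) <= \sum_(s in ~: P) (p1 s - p2 s) * w s.
  apply: ler_sum => s; rewrite !inE -leNgt => d_le0.
  by rewrite ler_niMr //; case/andP: (w01 s).
have pos : 0 <= \sum_(s in P) (p1 s - p2 s) * w s.
  apply: sumr_ge0 => s; rewrite inE => /ltW d_ge0.
  by rewrite mulr_ge0 //; case/andP: (w01 s).
have neg : \sum_(s in ~: P) (p1 s - p2 s) * w s <= 0.
  apply: sumr_le0 => s; rewrite !inE -leNgt => d_le0.
  by rewrite mulr_le0_ge0 //; case/andP: (w01 s).
have tvP := le_trans (ler_norm _) (le_tv_dist p1 p2 P).
have tvNP := lerNnormlW (le_tv_dist p1 p2 (~: P)).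
rewrite -!mass in tvP tvNP.
rewrite (bigID (mem P)) /=; under [X in _ + X]eq_bigl do rewrite -in_setC.
rewrite ler_norml; apply/andP; split; lra.
Qed.

Lemma tv_dist_push K p1 p2 : (forall s t, 0 <= K s t) -> (forall s, \sum_t K s t = 1) ->
  tv_dist (push K p1) (push K p2) <= tv_dist p1 p2.
Proof.
move=> K_ge0 K_sum1; apply: tv_dist_le => [|A]; first exact: tv_dist_ge0.
have -> : prob (push K p1) A - prob (push K p2) A =
          \sum_s (p1 s - p2 s) * \sum_(t in A) K s t.
  rewrite /prob /push -sumrB; under eq_bigr do rewrite -sumrB.
  rewrite exchange_big; apply: eq_bigr => s _.
  by rewrite mulr_sumr; under [RHS]eq_bigr do rewrite mulrBl.
apply: weighted_diff_le_tv => s; rewrite sumr_ge0 //= -(K_sum1 s).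
by rewrite [X in _ <= X](bigID (mem A)) /= lerDl sumr_ge0.
Qed.

End TotalVariation.

Section Colourings.
Variables (V : finType) (k : nat).
Local Notation col := (Defs.col V k).

Lemma proper_delete_edge (e e' : rel V) (a b : V) (s : col) :
  e' a b ->
  (forall x y, e x y = e' x y && ~~ (((x == a) && (y == b)) || ((x == b) && (y == a)))) ->
  Defs.proper e' s = Defs.proper e s && (s a != s b).
Proof.
move=> e'ab e_def; apply/idP/idP.
  move=> /forallP proper_s; apply/andP; split;
    last exact: implyP (forallP (proper_s a) b) e'ab.
  apply/forallP => x; apply/forallP => y; apply/implyP; rewrite e_def => /andP[e'xy _].
  exact: implyP (forallP (proper_s x) y) e'xy.
case/andP=> /forallP proper_s sab.
apply/forallP => x; apply/forallP => y; apply/implyP => e'xy.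
have [/orP[] /andP[/eqP-> /eqP->] //|not_ab] :=
  boolP (((x == a) && (y == b)) || ((x == b) && (y == a))).
  by rewrite eq_sym.
by apply: implyP (forallP (proper_s x) y) _; rewrite e_def e'xy not_ab.
Qed.

Lemma kempe_at_root (e : rel V) (a : V) (s : col) (q : 'I_k) : kempe e a s q a = q.
Proof. by rewrite /kempe ffunE inE connect0 eqxx. Qed.

Lemma sum_Omega_blocks (R : realFieldType) (e : rel V) (a b : V)
    (P : pred ('I_k * 'I_k)) (F : col -> R) :
  \sum_(t in Omega k e | P (t b, t a)) F t =
  \sum_(j | P j) \sum_(t in Omega_cq e a b j.2 j.1) F t.
Proof.
rewrite (partition_big (fun t : col => (t b, t a)) P) => [|t /andP[]//].
apply: eq_bigr => [[c q]] /= Pcq; apply: eq_bigl => t; rewrite !inE xpair_eqE.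
by case: (t b =P c) => [->|]; case: (t a =P q) => [->|]; rewrite ?Pcq ?andbF ?andbT ?andbA.
Qed.

Lemma alpha_iso_fun_image (R : realFieldType) (alpha : R) (Om1 Om2 : {set col}) F :
  alpha_iso_fun alpha Om1 Om2 F ->
  exists B : {set col}, [/\ B \subset Om2, B \subset F @: Om1,
    (1 - alpha) * #|Om1|%:R <= #|B|%:R & (1 - alpha) * #|Om2|%:R <= #|B|%:R].
Proof.
case=> A [B [sub_A sub_B large_A large_B [F_AB F_inj B_im]]].
have card_B : #|B| = #|A|.
  apply/eqP; rewrite eqn_leq (leq_trans (subset_leq_card B_im) (leq_imset_card _ _)) /=.
  rewrite -(card_in_imset F_inj) subset_leq_card //.
  by apply/subsetP => _ /imsetP[s sA ->]; exact: F_AB.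
exists B; split=> //; last by rewrite card_B.
exact: subset_trans B_im (imsetS _ sub_A).
Qed.

End Colourings.

Lemma sum_offdiag_fst (R : realFieldType) (n : nat) (f : 'I_n -> R) :
  \sum_(j : 'I_n * 'I_n | j.1 != j.2) f j.1 = n.-1%:R * \sum_c f c.
Proof.
rewrite -(pair_big_dep xpredT (fun c q => c != q) (fun c _ => f c)) /= mulr_sumr.
apply: eq_bigr => c _; rewrite sumr_const mulr_natl.
by rewrite (eq_card (B := predC1 c)) ?cardC1 ?card_ord // => q; rewrite !inE eq_sym.
Qed.

Lemma sum_diag (R : realFieldType) (n : nat) (f : 'I_n -> 'I_n -> R) :
  \sum_(j : 'I_n * 'I_n | j.1 == j.2) f j.1 j.2 = \sum_c f c c.
Proof.
rewrite -(pair_big_dep xpredT (fun c q => c == q) f) /=.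
by apply: eq_bigr => c _; rewrite (big_pred1 c) // => q; rewrite eq_sym.
Qed.

(* M = |Omega_{i+1}|, M + D = |Omega_i|, S = number of good Kempe images and
   kappa = k - 1: a good image lacks at most the first maximum, any other
   colouring of Omega_{i+1} at most 1/M - 1/(M + D). *)
Lemma deficit_arith (R : realFieldType) (M D S alpha kappa : R) :
  0 < M -> 0 <= D -> 0 <= alpha -> 1 <= kappa ->
  (1 - alpha) * M <= S -> (1 - alpha) * (kappa * D) <= S ->
  S * Num.max (M^-1 - (M + D)^-1 - (M + D)^-1 / kappa) 0
    + (M - S) * (M^-1 - (M + D)^-1) <= alpha.
Proof.
move=> M_gt0 D_ge0 alpha_ge0 kappa_ge1 S_ge_M S_ge_D.
have N_gt0 : 0 < M + D by lra.
set a := (M + D)^-1.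
have a_gt0 : 0 < a by rewrite invr_gt0.
have Mh : M * (M^-1 - a) = D * a.
  by rewrite /a; field; rewrite !gt_eqF.
have Da_le1 : D * a <= 1.
  by rewrite -[1](@mulfV _ (M + D)) ?gt_eqF // ler_wpM2r ?ltW //; lra.
have aDa : alpha * (D * a) <= alpha by rewrite ler_piMr.
have h_ge0 : 0 <= M^-1 - a.
  by rewrite -(pmulr_rge0 _ M_gt0) Mh mulr_ge0 // ltW.
have [g_le0|g_gt0] := leP (M^-1 - a - a / kappa) 0.
  rewrite mulr0 add0r.
  have : (M - S) * (M^-1 - a) <= (alpha * M) * (M^-1 - a) by rewrite ler_wpM2r //; lra.
  rewrite -mulrA Mh; lra.
have S_ge_Da : (1 - alpha) * (D * a) <= S * (a / kappa).
  have kappa_gt0 : 0 < kappa by lra.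
  have ak_ge0 : 0 <= a / kappa by rewrite divr_ge0 ?ltW.
  have -> : (1 - alpha) * (D * a) = (1 - alpha) * (kappa * D) * (a / kappa).
    by field; rewrite gt_eqF.
  by rewrite ler_wpM2r.
have -> : S * (M^-1 - a - a / kappa) + (M - S) * (M^-1 - a)
          = M * (M^-1 - a) - S * (a / kappa) by ring.
rewrite Mh; lra.
Qed.

Section StepKernel.
Variables (R : realFieldType) (V : finType) (k : nat) (E : nat -> rel V) (v u : nat -> V).
Variable i : nat.
Local Notation col := (Defs.col V k).
Local Notation K := (@step_kernel V k E v u R i).

Lemma step_kernel_ge0 (s t : col) : 0 <= K s t.
Proof.
rewrite /step_kernel; case: ifP => _; first by case: ifP.
by apply: sumr_ge0 => q _; rewrite mulr_ge0 ?invr_ge0 //; case: ifP.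
Qed.

Lemma step_kernel_sum1 (s : col) : (1 < k)%N -> \sum_t K s t = 1.
Proof.
move=> k_gt1; rewrite /step_kernel; case: (boolP (s (v i) != s (u i))) => _.
  by rewrite -big_mkcond big_pred1_eq.
rewrite exchange_big /=.
under eq_bigr => q _.
  rewrite -mulr_sumr (bigD1 (kempe (E i) (v i) s q)) //= eqxx big1 ?addr0 ?mulr1;
    last by move=> t; rewrite eq_sym => /negbTE ->.
over.
rewrite sumr_const (eq_card (B := predC1 (s (v i)))) // cardC1 card_ord.
by rewrite -(mulr_natl (k.-1%:R^-1)) mulfV // pnatr_eq0 -lt0n -ltnS prednK // ltnW.
Qed.

Lemma step_kernel_stay (s : col) : s (v i) != s (u i) -> K s s = 1.
Proof. by rewrite /step_kernel => ->; rewrite eqxx. Qed.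

Lemma step_kernel_kempe (s : col) (q : 'I_k) :
  s (v i) = s (u i) -> q != s (v i) -> (k.-1%:R)^-1 <= K s (kempe (E i) (v i) s q).
Proof.
move=> s_vu q_neq; rewrite /step_kernel s_vu eqxx /= (bigD1 q) -?s_vu //= eqxx mulr1.
by rewrite lerDl sumr_ge0 // => q' _; rewrite mulr_ge0 ?invr_ge0 //; case: ifP.
Qed.

End StepKernel.

Lemma unif_ge0 (R : realFieldType) (V : finType) (k : nat) (S : {set Defs.col V k}) t :
  0 <= unif S t :> R.
Proof. by rewrite /unif; case: ifP => // _; rewrite invr_ge0. Qed.

Lemma unif_sum1 (R : realFieldType) (V : finType) (k : nat) (S : {set Defs.col V k}) :
  S != set0 -> \sum_t unif S t = 1 :> R.
Proof.
move=> S_neq0; rewrite /unif -big_mkcond sumr_const -(mulr_natl (#|S|%:R^-1)) mulfV //.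
by rewrite pnatr_eq0 -lt0n card_gt0.
Qed.

Section DeletionStep.
Variables (R : realFieldType) (V : finType) (k : nat) (E : nat -> rel V) (v u : nat -> V).
Variable i : nat.
Hypotheses (k_gt1 : (1 < k)%N) (edge_vu : E i.+1 (v i) (u i)).
Hypothesis deleteE : forall x y, E i x y =
  E i.+1 x y && ~~ (((x == v i) && (y == u i)) || ((x == u i) && (y == v i))).
Hypothesis Omega_succ_neq0 : Omega k (E i.+1) != set0.

Local Notation col := (Defs.col V k).
Local Notation O := (Omega k (E i)).
Local Notation O' := (Omega k (E i.+1)).
Local Notation blk c q := (@Omega_cq V k (E i) (v i) (u i) c q).
Local Notation H s q := (kempe (E i) (v i) s q).
Local Notation K := (@step_kernel V k E v u R i).
Local Notation p := (push K (unif O)).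
Local Notation N := (#|O|%:R : R).
Local Notation M := (#|O'|%:R : R).
Local Notation kappa := (k.-1%:R : R).

Lemma mem_Omega_succ (t : col) : (t \in O') = (t \in O) && (t (v i) != t (u i)).
Proof. by rewrite !inE (proper_delete_edge _ edge_vu deleteE). Qed.

Lemma Omega_succ_sub : O' \subset O.
Proof. by apply/subsetP => t; rewrite mem_Omega_succ => /andP[]. Qed.

Lemma Omega_cq_sub_succ (c q : 'I_k) : c != q -> blk c q \subset O'.
Proof.
move=> cq; apply/subsetP => t; rewrite mem_Omega_succ !inE => /and3P[-> /eqP-> /eqP->].
exact: cq.
Qed.

Lemma inv_card_Omega_le : N^-1 <= M^-1.
Proof.
have M_gt0 : 0 < M by rewrite ltr0n card_gt0.
have M_le_N : M <= N by rewrite ler_nat subset_leq_card // Omega_succ_sub.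
by rewrite lef_pV2 ?posrE // (lt_le_trans M_gt0).
Qed.

Lemma step_law_ge_stay (t : col) : t \in O' -> N^-1 <= p t.
Proof.
rewrite mem_Omega_succ => /andP[t_O t_vu].
rewrite /push (bigD1 t) //= /unif t_O step_kernel_stay // mulr1 lerDl.
by apply: sumr_ge0 => s _; rewrite mulr_ge0 ?unif_ge0 ?step_kernel_ge0.
Qed.

Lemma step_law_ge_kempe (c q : 'I_k) (s : col) : c != q -> s \in blk c c ->
  H s q \in O' -> N^-1 + N^-1 / kappa <= p (H s q).
Proof.
move=> cq; rewrite inE => /and3P[s_proper /eqP s_v /eqP s_u].
rewrite mem_Omega_succ => /andP[t_O t_vu].
have s_O : s \in O by rewrite inE.
have s_neq_t : s != H s q by apply: contra_neq cq => st; rewrite -s_v st kempe_at_root.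
rewrite /push (bigD1 (H s q)) //= (bigD1 s s_neq_t) /= /unif t_O s_O.
rewrite step_kernel_stay // mulr1 lerD2l -[X in X <= _]addr0 lerD //.
  by rewrite ler_wpM2l ?invr_ge0 // step_kernel_kempe ?s_v ?s_u // eq_sym.
by apply: sumr_ge0 => s' _; rewrite mulr_ge0 ?unif_ge0 ?step_kernel_ge0.
Qed.

Definition deficit (t : col) : R := Num.max (M^-1 - p t) 0.

Lemma deficit_block (c q : 'I_k) (B : {set col}) :
  c != q -> B \subset blk q c -> B \subset [set H s q | s in blk c c] ->
  \sum_(t in blk q c) deficit t <=
    #|B|%:R * Num.max (M^-1 - N^-1 - N^-1 / kappa) 0
    + (#|blk q c|%:R - #|B|%:R) * (M^-1 - N^-1).
Proof.
move=> cq sub_blk sub_img.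
have blk_O' := Omega_cq_sub_succ (contra_neq esym cq).
rewrite (big_setID B) /= (setIidPr sub_blk); apply: lerD.
  rewrite mulr_natl -sumr_const; apply: ler_sum => t tB.
  have t_O' : t \in O' by apply: subsetP blk_O' _ (subsetP sub_blk t tB).
  have /imsetP[s s_cc t_eq] := subsetP sub_img t tB; rewrite t_eq in t_O' *.
  rewrite /deficit le_max2 // -addrA -opprD lerD2l lerN2.
  exact: step_law_ge_kempe s_cc t_O'.
have -> : #|blk q c|%:R - #|B|%:R = #|blk q c :\: B|%:R :> R.
  by rewrite cardsD (setIidPr sub_blk) natrB // subset_leq_card.
rewrite mulr_natl -sumr_const; apply: ler_sum => t; rewrite inE => /andP[_ t_blk].
rewrite /deficit ge_max subr_ge0 inv_card_Omega_le andbT lerD2l lerN2.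
exact/step_law_ge_stay/(subsetP blk_O').
Qed.

Lemma sum_Omega_succ (F : col -> R) :
  \sum_(t in O') F t = \sum_(j | j.1 != j.2) \sum_(t in blk j.2 j.1) F t.
Proof.
rewrite -(sum_Omega_blocks (E i) (v i) (u i) (fun j => j.1 != j.2)).
by apply: eq_bigl => t; rewrite mem_Omega_succ eq_sym.
Qed.

Lemma card_Omega_succ : M = \sum_(j | j.1 != j.2) #|blk j.2 j.1|%:R.
Proof. by rewrite -sumr_const sum_Omega_succ; under eq_bigr do rewrite sumr_const. Qed.

Lemma card_Omega_split : N = M + \sum_c #|blk c c|%:R.
Proof.
rewrite card_Omega_succ -sumr_const -(sum_diag (fun c q => #|blk q c|%:R)).
rewrite (eq_bigl (fun t => (t \in O) && xpredT (t (u i), t (v i)))) => [|t]; last first.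
  by rewrite andbT.
rewrite (sum_Omega_blocks (E i) (v i) (u i) xpredT) (bigID (fun j => j.1 == j.2)) addrC /=.
by congr (_ + _); apply: eq_bigr => j _; rewrite sumr_const.
Qed.

Lemma tv_unif_step (alpha : R) : 0 <= alpha ->
  (forall c q : 'I_k, c != q ->
     alpha_iso_fun alpha (blk c c) (blk q c) (fun s => H s q)) ->
  tv_dist (unif O') p <= alpha.
Proof.
move=> alpha_ge0 iso.
have O_neq0 : O != set0 := subset_neq0 Omega_succ_sub Omega_succ_neq0.
have same_mass : \sum_t unif O' t = \sum_t p t.
  by rewrite sum_push ?unif_sum1 // => s; exact: step_kernel_sum1.
apply: le_trans (tv_dist_le_excess same_mass) _.
have p_ge0 t : 0 <= p t.
  by apply: push_ge0 => [s t'|s]; [exact: step_kernel_ge0 | exact: unif_ge0].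
have -> : \sum_t Num.max (unif O' t - p t) 0 = \sum_(t in O') deficit t.
  rewrite (bigID (mem O')) /= [X in _ + X]big1 ?addr0 => [|t t_O'].
    by apply: eq_bigr => t t_O'; rewrite {1}/unif t_O'.
  have -> : unif O' t = 0 by rewrite /unif (negbTE t_O').
  by rewrite sub0r max_r // oppr_le0.
have /fin_all_exists[B large_B] : forall j : 'I_k * 'I_k,
    exists B : {set col}, j.1 != j.2 ->
    [/\ B \subset blk j.2 j.1, B \subset [set H s j.2 | s in blk j.1 j.1],
        (1 - alpha) * #|blk j.1 j.1|%:R <= #|B|%:R
      & (1 - alpha) * #|blk j.2 j.1|%:R <= #|B|%:R].
  move=> [c q] /=; have [->|cq] := eqVneq c q; first by exists set0.
  by have [B] := alpha_iso_fun_image (iso c q cq); exists B.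
rewrite sum_Omega_succ.
apply: le_trans (_ : _ <= \sum_(j | j.1 != j.2)
  (#|B j|%:R * Num.max (M^-1 - N^-1 - N^-1 / kappa) 0
   + (#|blk j.2 j.1|%:R - #|B j|%:R) * (M^-1 - N^-1))) _.
  apply: ler_sum => j off; have [sub img _ _] := large_B j off.
  exact: deficit_block.
rewrite big_split /= -!mulr_suml sumrB -card_Omega_succ card_Omega_split.
apply: deficit_arith => //.
- by rewrite ltr0n card_gt0.
- by rewrite sumr_ge0.
- by rewrite ler1n ltn_predRL.
- rewrite card_Omega_succ mulr_sumr; apply: ler_sum => j off.
  by case: (large_B j off).
rewrite -sum_offdiag_fst mulr_sumr; apply: ler_sum => j off.
by case: (large_B j off).
Qed.

End DeletionStep.

Lemma Omega_deletion_chain (V : finType) (k r : nat) (E : nat -> rel V) (v u : nat -> V) :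
  (forall i, (i < r)%N ->
     E i.+1 (v i) (u i) /\
     (forall x y, E i x y =
        E i.+1 x y && ~~ (((x == v i) && (y == u i)) || ((x == u i) && (y == v i))))) ->
  forall j, (j <= r)%N -> Omega k (E r) \subset Omega k (E j).
Proof.
move=> delete j jr.
have decr : {in [pred j | j <= r] &, {homo (fun j => Omega k (E j)) :
    j j' / (j <= j')%N >-> j' \subset j}}%N.
  apply: homo_leq_in => [A|A B C AB BC|j1 j2 /= _ j2r j3|i _ /= ir].
  - exact: subxx.
  - exact: subset_trans BC AB.
  - by case/andP=> _ /ltnW /leq_trans; apply.
  - have [edge del] := delete i ir.
    exact: (Omega_succ_sub k edge del).
by apply: decr; rewrite ?inE /=.
Qed.

Theorem theorem5 (R : realFieldType) (V : finType) (k r : nat)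
  (E : nat -> rel V) (v u : nat -> V) (alpha : R) :
  (1 < k)%N ->
  (forall i, (i <= r)%N -> irreflexive (E i) /\ symmetric (E i)) ->
  (* G_i is obtained from G_{i+1} by deleting the edge {v_i, u_i} *)
  (forall i, (i < r)%N ->
     E i.+1 (v i) (u i) /\
     (forall x y, E i x y =
        E i.+1 x y && ~~ (((x == v i) && (y == u i)) || ((x == u i) && (y == v i))))) ->
  (* G = G_r has a k-colouring, so that mu is defined *)
  Omega k (E r) != set0 ->
  0 <= alpha <= 1 ->
  (forall i, (i < r)%N -> forall c q : 'I_k, c != q ->
     alpha_iso_fun alpha (Omega_cq (E i) (v i) (u i) c c)
                         (Omega_cq (E i) (v i) (u i) q c)
                         (fun s => kempe (E i) (v i) s q)) ->
  tv_dist (unif (Omega k (E r))) (@law V k E v u R r) <= r%:R * alpha.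
Proof.
move=> k_gt1 _ delete Omega_r_neq0 /andP[alpha_ge0 _] iso.
have Omega_r_sub := Omega_deletion_chain k delete.
suff tv_law j : (j <= r)%N ->
    tv_dist (unif (Omega k (E j))) (@law V k E v u R j) <= j%:R * alpha.
  exact: tv_law.
elim: j => [_|j IH jr].
  by rewrite mul0r; apply: tv_dist_le => // A; rewrite subrr normr0.
have [edge del] := delete j jr.
have Omega_neq0 : Omega k (E j.+1) != set0.
  exact: subset_neq0 (Omega_r_sub _ jr) Omega_r_neq0.
have -> : @law V k E v u R j.+1 = push (step_kernel E v u j) (law E v u j) by [].
apply: le_trans (tv_dist_triangle _ (push (step_kernel E v u j) (unif (Omega k (E j)))) _) _.
rewrite [j.+1%:R]mulrS mulrDl mul1r lerD //.
  by apply: tv_unif_step => //; exact: iso.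
apply: le_trans _ (IH (ltnW jr)).
by apply: tv_dist_push => [s t|s]; [exact: step_kernel_ge0 | exact: step_kernel_sum1].
Qed.
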